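(* For a polynomial $f(z)$ with complex coefficients define the rational function $$\mathcal{L}_z(f)=f\frac{d^2f}{dz^2}-\left(\frac{df}{dz}\right)^2+\frac{f}{z}\frac{df}{dz}.$$ Let $f(z)$ and $g(z)$ be arbitrary polynomials. Then: (a) $\mathcal{L}_z(kf)=k^2\,\mathcal{L}_z(f)$ for every constant $k$; (b) $\mathcal{L}_z(fg)=f^2\,\mathcal{L}_z(g)+g^2\,\mathcal{L}_z(f)$; (c) if $h=-z\,\mathcal{L}_z(f)+k(z+\mu)f^2$, where $k$ and $\mu$ are constants, then $f$ divides $z\,\mathcal{L}_z(h)-2k(z+\mu)h^2$ (in the polynomial ring $\mathbb{C}[z]$).
   Context: Here $\mathcal{L}_z$ is the Hirota-like operator defined in the claim; note that $h$ and $z\,\mathcal{L}_z(h)$ are polynomials when $f$ is a polynomial. *)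

From HB Require Import structures.
From mathcomp Require Import all_boot all_order all_algebra.
From mathcomp Require Import complex Rstruct.
From Stdlib Require Import Reals.
Set Implicit Arguments. Unset Strict Implicit. Unset Printing Implicit Defensive.
Import Order.TTheory GRing.Theory Num.Theory.
Local Open Scope ring_scope.

Definition CC : rcfType := Rdefinitions.R.
Notation Cplx := (complex CC).

Notation ratfun := {fraction {poly Cplx}}.
Notation "p %:RF" := (@tofrac _ p) (at level 2, format "p %:RF").

Definition Lz (f : {poly Cplx}) : ratfun :=
  f%:RF * (f^`(2))%:RF - (f^`())%:RF ^+ 2 + f%:RF / ('X)%:RF * (f^`())%:RF.

From HB Require Import structures.
From mathcomp Require Import all_boot all_order all_algebra.
From mathcomp Require Import complex Rstruct.
From mathcomp Require Import ring.
Import Order.TTheory GRing.Theory Num.Theory.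
Local Open Scope ring_scope.

(* Multiplying by z turns L_z into the polynomial operator
   XLz f = z (f f'' - f'^2) + f f', for which (a) and (b) are polynomial
   identities.  For (c) we compute modulo f through an arbitrary ring morphism
   pi with pi f = 0, expanding all derivatives before applying pi: adding
   b f^2 to a changes XLz a by 2 z a b f'^2 only, XLz f reduces to - z f'^2 and
   XLz (XLz f) reduces to 0, which together make XLz h - 2 b h^2 vanish.  The
   projection onto {poly %/ f} (with f made monic) turns this into
   divisibility. *)

Definition XLz {R : nzRingType} (f : {poly R}) : {poly R} :=
  'X * (f * f^`()^`() - f^`() ^+ 2) + f * f^`().

Section XLzAlgebra.
Variable R : comNzRingType.
Implicit Types (c : R) (f g : {poly R}).

Lemma XLzN f : XLz (- f) = XLz f.
Proof. by rewrite /XLz !derivN; ring. Qed.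

Lemma XLzC c : XLz c%:P = 0.
Proof. by rewrite /XLz !derivC; ring. Qed.

Lemma XLzM f g : XLz (f * g) = f ^+ 2 * XLz g + g ^+ 2 * XLz f.
Proof. by rewrite /XLz !derivM !derivD !derivM; ring. Qed.

End XLzAlgebra.

Section XLzModulo.
Variables (R S : comNzRingType) (pi : {rmorphism {poly R} -> S}) (f : {poly R}).
Hypothesis pi_f : pi f = 0.

Lemma rmorph_XLz_self : pi (XLz f) = - pi ('X * f^`() ^+ 2).
Proof. by rewrite /XLz !(rmorphE, rmorphM) pi_f; ring. Qed.

Lemma rmorph_XLzD_sqr a b :
  pi (XLz (a + b * f ^+ 2)) = pi (XLz a + 2%:R * 'X * a * b * f^`() ^+ 2).
Proof. by rewrite /XLz !derivE !(rmorphE, rmorphM) pi_f; ring. Qed.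

Lemma rmorph_XLz_XLz : pi (XLz (XLz f)) = 0.
Proof. by rewrite /XLz !derivE !(rmorphE, rmorphM) pi_f; ring. Qed.

Lemma rmorph_XLz_step b h : h = - XLz f + b * f ^+ 2 ->
  pi (XLz h - 2%:R * b * h ^+ 2) = 0.
Proof.
move=> ->; rewrite rmorphB rmorph_XLzD_sqr XLzN rmorphD rmorph_XLz_XLz.
(* Generalized so that the morphism rewrites below do not unfold it. *)
move: (XLz f) rmorph_XLz_self => g pi_g.
rewrite !(rmorphE, rmorphM) pi_g pi_f; ring.
Qed.

End XLzModulo.

Lemma in_qpoly_eq0 (F : fieldType) (g p : {poly F}) :
  g \is monic -> (1 < size g)%N -> (in_qpoly g p == 0) = (g %| p).
Proof.
move=> g_monic g_gt1; rewrite /dvdp (Pdiv.IdomainMonic.modpE g_monic).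
by rewrite -val_eqE /= /mk_monic g_gt1 g_monic.
Qed.

Lemma dvdp_XLz_step {F : fieldType} {b f h : {poly F}} :
  h = - XLz f + b * f ^+ 2 -> f %| XLz h - 2%:R * b * h ^+ 2.
Proof.
have [-> | f_neq0] := eqVneq f 0.
  have XLz0 : XLz (0 : {poly F}) = 0 by rewrite -polyC0 XLzC.
  by move=> ->; rewrite !(XLz0, expr0n, mulr0, oppr0, add0r, subrr).
have [f_le1 | f_gt1] := leqP (size f) 1.
  by move=> _; apply: dvdUp; rewrite -size_poly_eq1 eqn_leq f_le1 size_poly_gt0.
pose g := (lead_coef f)^-1 *: f.
have lcf_neq0 : lead_coef f != 0 by rewrite lead_coef_eq0.
have g_monic : g \is monic by rewrite monicE lead_coefZ mulVf.
have g_gt1 : (1 < size g)%N by rewrite size_scale ?invr_eq0.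
have f_eqp_g : f %= g by rewrite eqp_sym eqp_scale ?invr_eq0.
move=> hE; rewrite (eqp_dvdl _ f_eqp_g) -in_qpoly_eq0 //; apply/eqP.
by apply: rmorph_XLz_step hE; apply/eqP; rewrite in_qpoly_eq0 // -(eqp_dvdl _ f_eqp_g).
Qed.

Lemma tofracX_neq0 : ('X : {poly Cplx})%:RF != 0.
Proof. by rewrite tofrac_eq0 polyX_eq0. Qed.

Lemma LzE (f : {poly Cplx}) : Lz f = (XLz f)%:RF / ('X)%:RF.
Proof.
rewrite /Lz /XLz !(rmorphE, rmorphM) mulrDl [_%:RF * (_ - _)]mulrC.
by rewrite mulfK ?tofracX_neq0 // mulrAC.
Qed.

Lemma tofrac_XLz (f : {poly Cplx}) : (XLz f)%:RF = ('X)%:RF * Lz f.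
Proof. by rewrite LzE mulrC divfK ?tofracX_neq0. Qed.

Lemma Lz_polyC (c : Cplx) : Lz c%:P = 0.
Proof. by rewrite LzE XLzC rmorph0 mul0r. Qed.

Lemma LzM (f g : {poly Cplx}) :
  Lz (f * g) = f%:RF ^+ 2 * Lz g + g%:RF ^+ 2 * Lz f.
Proof. by rewrite !LzE XLzM rmorphD mulrDl !(rmorphXn, rmorphM) !mulrA. Qed.

Theorem lemma3p1 :
  (forall (f : {poly Cplx}) (k : Cplx), Lz (k%:P * f) = (k%:P)%:RF ^+ 2 * Lz f)
  /\ (forall f g : {poly Cplx}, Lz (f * g) = f%:RF ^+ 2 * Lz g + g%:RF ^+ 2 * Lz f)
  /\ (forall (f h : {poly Cplx}) (k mu : Cplx),
        h%:RF = - ('X)%:RF * Lz f + (k%:P * ('X + mu%:P) * f ^+ 2)%:RF ->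
        exists q : {poly Cplx},
          ('X)%:RF * Lz h - (2%:R * k%:P * ('X + mu%:P) * h ^+ 2)%:RF = (f * q)%:RF).
Proof.
split; first by move=> f k; rewrite LzM Lz_polyC mulr0 addr0.
split; first exact: LzM.
move=> f h k mu hE.
rewrite mulNr -tofrac_XLz -rmorphN -rmorphD in hE.
move/eqP: hE; rewrite tofrac_eq => /eqP hE.
have /dvdpP [q Eq] := dvdp_XLz_step hE.
by exists q; rewrite -tofrac_XLz -rmorphB -[2%:R * _ * _]mulrA Eq mulrC.
Qed.
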